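(* For positive integers $r,n$, $$T(r,n):=\sum_{t\mid r}\frac{|\mu(t_{(n)})|}{\phi(t_{(n)})}\,\phi(t)=\gcd(r,n)\cdot W\big(\gcd(r,r_{(n)})\big).$$
   Context: For positive integers $a,b$, $a_{(b)}:=a/\gcd(a,b)$. $\mu$ is the Möbius function, $\phi$ is Euler's totient function, and $W(a)$ denotes the number of square-free divisors of the positive integer $a$. *)

From mathcomp Require Import all_boot all_order all_algebra.
Set Implicit Arguments. Unset Strict Implicit. Unset Printing Implicit Defensive.
Import Order.TTheory GRing.Theory Num.Theory.

(* a_(b) := a / gcd(a,b) *)
Definition quotg (a b : nat) : nat := a %/ gcdn a b.

(* n is squarefree: no prime appears with exponent >= 2 (n > 0 assumed) *)
Definition squarefree (n : nat) : bool := all (fun p => logn p n <= 1) (primes n).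

(* Moebius function (mu 0 := 0 by convention; unused) *)
Definition moebius (n : nat) : int :=
  if (0 < n) && squarefree n then ((-1) ^+ size (primes n))%R else 0%R.

Definition W (a : nat) : nat := count squarefree (divisors a).

From mathcomp Require Import all_boot all_order all_algebra.
From mathcomp Require Import zify ring.
Import Order.TTheory GRing.Theory Num.Theory.

(* For fixed n > 0 both sides are multiplicative functions of r, so it is
   enough to compare them on prime powers p^a.
   1. Arithmetic functions g whose p-adic valuation is a function of the
      p-adic valuation of the argument (g = gcd(-,n), (-)_(n), gcd(-,(-)_(n)))
      are multiplicative and map p^a to an explicit power of p.
   2. Divisor sums of multiplicative functions are multiplicative, and two
      multiplicative functions agreeing on prime powers agree everywhere.
   3. With b = v_p(n), the summand of T at t = p^j equals phi(p^j) for j <= b,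
      p^b for j = b+1 and 0 beyond, so T(p^a,n) = p^min(a,b) * (2 if b < a
      else 1); the right-hand side gives p^min(a,b) * W(p^(a - min(a,b))),
      with W(p^e) = 2 if e > 0 and 1 if e = 0. *)

Lemma coprime_logn0 u v p : coprime u v -> (logn p u == 0) || (logn p v == 0).
Proof.
move=> co; case: (posnP (logn p u)) => [//|]; case: (posnP (logn p v)) => [|].
  by rewrite orbT.
rewrite !logn_gt0 !mem_primes => /and3P[pp _ pv] /and3P[_ _ pu].
have : p %| gcdn u v by rewrite dvdn_gcd pu pv.
by rewrite (eqP co) dvdn1 => /eqP p1; rewrite p1 in pp.
Qed.

Section ValuationDescribed.
Variables (g : nat -> nat) (h : nat -> nat -> nat).
Hypothesis g_gt0 : forall m, 0 < m -> 0 < g m.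
Hypothesis logn_g : forall p m, 0 < m -> logn p (g m) = h p (logn p m).
Hypothesis h0 : forall p, h p 0 = 0.

Lemma valuation_described_mul u v :
  coprime u v -> 0 < u -> 0 < v -> g (u * v) = g u * g v.
Proof.
move=> co u0 v0; have uv0 : 0 < u * v by rewrite muln_gt0 u0.
apply: eqn_from_log; rewrite ?muln_gt0 ?g_gt0 // => p.
rewrite lognM ?g_gt0 // !logn_g // lognM //.
by case/orP: (coprime_logn0 _ _ p co) => /eqP->; rewrite h0 ?addn0 ?add0n.
Qed.

Lemma valuation_described_pexp p a : prime p -> g (p ^ a) = p ^ h p a.
Proof.
move=> pp; have pa0 : 0 < p ^ a by rewrite expn_gt0 prime_gt0.
apply: eqn_from_log; rewrite ?g_gt0 ?expn_gt0 ?prime_gt0 // => q.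
rewrite logn_g // !lognX !logn_prime //.
by case: eqP => [->|_]; rewrite ?muln1 ?muln0 ?h0.
Qed.
End ValuationDescribed.

Lemma quotg_gt0 a n : 0 < a -> 0 < quotg a n.
Proof. by move=> a0; rewrite /quotg divn_gt0 ?gcdn_gt0 ?a0 // dvdn_leq // dvdn_gcdl. Qed.

Lemma quotg_dvd a n : quotg a n %| a.
Proof. by rewrite /quotg dvdn_div // dvdn_gcdl. Qed.

Lemma logn_quotg p a n : 0 < a -> 0 < n ->
  logn p (quotg a n) = logn p a - minn (logn p a) (logn p n).
Proof. by move=> a0 n0; rewrite /quotg logn_div ?dvdn_gcdl // logn_gcd. Qed.

Definition gcd_quotg (n r : nat) : nat := gcdn r (quotg r n).

Lemma gcd_quotg_gt0 n r : 0 < r -> 0 < gcd_quotg n r.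
Proof. by move=> r0; rewrite /gcd_quotg gcdn_gt0 r0. Qed.

Lemma logn_gcd_quotg p n r : 0 < n -> 0 < r ->
  logn p (gcd_quotg n r) = logn p r - minn (logn p r) (logn p n).
Proof. by move=> n0 r0; rewrite /gcd_quotg logn_gcd ?quotg_gt0 // logn_quotg //; lia. Qed.

Section FixedModulus.
Variable n : nat.
Hypothesis n_gt0 : 0 < n.

Let gcd_val (p e : nat) : nat := minn e (logn p n).
Let quot_val (p e : nat) : nat := e - minn e (logn p n).

Lemma gcdn_mul_coprime u v : coprime u v -> 0 < u -> 0 < v ->
  gcdn (u * v) n = gcdn u n * gcdn v n.
Proof.
apply: (valuation_described_mul (gcdn^~ n) gcd_val) => [m m0|q m m0|q];
  rewrite /gcd_val.
- by rewrite gcdn_gt0 m0.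
- by rewrite logn_gcd.
- by rewrite min0n.
Qed.

Lemma quotg_mul_coprime u v : coprime u v -> 0 < u -> 0 < v ->
  quotg (u * v) n = quotg u n * quotg v n.
Proof.
apply: (valuation_described_mul (quotg^~ n) quot_val) => [m m0|q m m0|q];
  rewrite /quot_val.
- exact: quotg_gt0.
- by rewrite logn_quotg.
- by rewrite min0n.
Qed.

Lemma gcd_quotg_mul_coprime u v : coprime u v -> 0 < u -> 0 < v ->
  gcd_quotg n (u * v) = gcd_quotg n u * gcd_quotg n v.
Proof.
apply: (valuation_described_mul (gcd_quotg n) quot_val) => [m m0|q m m0|q];
  rewrite /quot_val.
- exact: gcd_quotg_gt0.
- by rewrite logn_gcd_quotg.
- by rewrite min0n.
Qed.

Lemma gcdn_pexp p a : prime p -> gcdn (p ^ a) n = p ^ minn a (logn p n).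
Proof.
apply: (valuation_described_pexp (gcdn^~ n) gcd_val) => [m m0|q m m0|q];
  rewrite /gcd_val.
- by rewrite gcdn_gt0 m0.
- by rewrite logn_gcd.
- by rewrite min0n.
Qed.

Lemma quotg_pexp p a : prime p -> quotg (p ^ a) n = p ^ (a - minn a (logn p n)).
Proof.
apply: (valuation_described_pexp (quotg^~ n) quot_val) => [m m0|q m m0|q];
  rewrite /quot_val.
- exact: quotg_gt0.
- by rewrite logn_quotg.
- by rewrite min0n.
Qed.

Lemma gcd_quotg_pexp p a : prime p ->
  gcd_quotg n (p ^ a) = p ^ (a - minn a (logn p n)).
Proof.
apply: (valuation_described_pexp (gcd_quotg n) quot_val) => [m m0|q m m0|q];
  rewrite /quot_val.
- exact: gcd_quotg_gt0.
- by rewrite logn_gcd_quotg.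
- by rewrite min0n.
Qed.
End FixedModulus.

Lemma squarefreeP k : reflect (forall p, logn p k <= 1) (squarefree k).
Proof.
apply: (iffP allP) => sqf p; last by move=> _; apply: sqf.
by case: (posnP (logn p k)) => [->//|]; rewrite logn_gt0 => /sqf.
Qed.

Lemma squarefree_mul u v : coprime u v -> 0 < u -> 0 < v ->
  squarefree (u * v) = squarefree u && squarefree v.
Proof.
move=> co u0 v0.
apply/squarefreeP/andP => [sqf|[/squarefreeP su /squarefreeP sv] p].
  by split; apply/squarefreeP => q; move: (sqf q); rewrite lognM //; lia.
by rewrite lognM //; move: (coprime_logn0 _ _ p co) (su p) (sv p); lia.
Qed.

Lemma squarefree_pexp p j : prime p -> squarefree (p ^ j) = (j <= 1).
Proof.
move=> pp; apply/squarefreeP/idP => [sqf|j1 q].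
  by move: (sqf p); rewrite pfactorK.
by rewrite lognX logn_prime //; case: (q == p); lia.
Qed.

Lemma abs_moebius k : 0 < k -> (`|moebius k|%:~R : rat) = (squarefree k)%:R%R.
Proof.
move=> k0; rewrite /moebius k0 /=.
by case: (squarefree k); rewrite //= normrX normrN1 expr1n.
Qed.

Lemma divisors_pexp p a : prime p ->
  perm_eq (divisors (p ^ a)) [seq p ^ j | j <- index_iota 0 a.+1].
Proof.
move=> pp; apply: uniq_perm; first exact: divisors_uniq.
  by rewrite map_inj_uniq ?iota_uniq //; apply: expnI; apply: prime_gt1.
move=> d; rewrite -dvdn_divisors ?expn_gt0 ?prime_gt0 //.
apply/(dvdn_pfactor d a pp)/mapP => [[m ma ->]|[m mi ->]]; exists m => //.
  by rewrite mem_index_iota; lia.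
by move: mi; rewrite mem_index_iota; lia.
Qed.

Lemma gcdn_coprime_factor [u v a b] : coprime u v -> a %| u -> b %| v ->
  gcdn u (a * b) = a.
Proof.
move=> co au bv; rewrite Gauss_gcdl; first exact/gcdn_idPr.
exact: coprime_dvdr bv co.
Qed.

Lemma divisors_mul_coprime [u v] : coprime u v -> 0 < u -> 0 < v ->
  perm_eq (divisors (u * v)) [seq a * b | a <- divisors u, b <- divisors v].
Proof.
move=> co u0 v0; have uv0 : 0 < u * v by rewrite muln_gt0 u0.
apply: uniq_perm; first exact: divisors_uniq.
  apply: allpairs_uniq; try exact: divisors_uniq.
  move=> [a1 b1] [a2 b2] /allpairsP[[x1 y1] /= [a1u b1v [-> ->]]].
  move=> /allpairsP[[x2 y2] /= [a2u b2v [-> ->]]] /= eq12.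
  rewrite -!dvdn_divisors // in a1u b1v a2u b2v.
  have co' : coprime v u by rewrite coprime_sym.
  rewrite -(gcdn_coprime_factor co a1u b1v) eq12 (gcdn_coprime_factor co a2u b2v).
  rewrite -(gcdn_coprime_factor co' b1v a1u) mulnC eq12 mulnC.
  by rewrite (gcdn_coprime_factor co' b2v a2u).
move=> d; rewrite -dvdn_divisors //; apply/idP/allpairsP.
  move=> duv; exists (gcdn d u, gcdn d v) => /=.
  rewrite -!dvdn_divisors // !dvdn_gcdr; split=> //.
  rewrite ![gcdn d _]gcdnC -gcdn_mul_coprime ?(dvdn_gt0 uv0 duv) //.
  exact/esym/gcdn_idPr.
by move=> [[a b] /= [ai bi ->]]; rewrite -!dvdn_divisors // in ai bi; apply: dvdn_mul.
Qed.

Local Open Scope ring_scope.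

Definition multiplicative {R : pzSemiRingType} (F : nat -> R) : Prop :=
  forall u v, coprime u v -> (0 < u)%N -> (0 < v)%N -> F (u * v)%N = F u * F v.

Lemma multiplicative_divisor_sum {R : pzSemiRingType} {F : nat -> R} :
  multiplicative F -> multiplicative (fun r => \sum_(d <- divisors r) F d).
Proof.
move=> FM u v co u0 v0 /=.
rewrite (perm_big _ (divisors_mul_coprime co u0 v0)) big_allpairs_dep big_distrl /=.
apply: eq_big_seq => a; rewrite -dvdn_divisors // => au.
rewrite big_distrr /=; apply: eq_big_seq => b; rewrite -dvdn_divisors // => bv.
apply: FM; first exact: coprime_dvdl au (coprime_dvdr bv co).
  exact: dvdn_gt0 au.
exact: dvdn_gt0 bv.
Qed.

(* Multiplicative functions agreeing on prime powers agree on all r > 0: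
   split off the p-part of r for its least prime divisor p and induct. *)
Lemma multiplicative_eq {R : pzSemiRingType} {F G : nat -> R} :
  multiplicative F -> multiplicative G ->
  (forall p a, prime p -> F (p ^ a)%N = G (p ^ a)%N) ->
  forall r, (0 < r)%N -> F r = G r.
Proof.
move=> FM GM FG_pexp; elim/ltn_ind=> r IH r0.
have [r_le1|r_gt1] := leqP r 1.
  have -> : r = (2 ^ 0)%N by lia.
  exact: FG_pexp.
pose p := pdiv r; have pp : prime p := pdiv_prime r_gt1.
have rE := partnC p r0.
have rp_gt1 : (1 < r`_p)%N by rewrite p_part_gt1 pi_pdiv.
have rp'_lt : (r`_p^' < r)%N by rewrite -[X in (_ < X)%N]rE ltn_Pmull ?part_gt0.
rewrite -rE FM ?GM ?part_gt0 ?coprime_partC // p_part FG_pexp //.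
by rewrite IH ?part_gt0.
Qed.

Lemma W_sum a : ((W a)%:R : rat) = \sum_(d <- divisors a) (squarefree d)%:R.
Proof.
rewrite /W -sum1_count natr_sum big_mkcond /=.
by apply: eq_bigr => d _; case: (squarefree d).
Qed.

Lemma squarefree_indicator_mul : multiplicative (fun d => (squarefree d)%:R : rat).
Proof. by move=> u v co u0 v0; rewrite squarefree_mul // -natrM mulnb. Qed.

Lemma W_mul : multiplicative (fun a => (W a)%:R : rat).
Proof.
move=> u v co u0 v0; rewrite !W_sum.
exact: (multiplicative_divisor_sum squarefree_indicator_mul _ _ co u0 v0).
Qed.

(* W(p^e) = 2 for e > 0: the squarefree divisors are 1 and p. *)
Lemma W_pexp p e : prime p -> W (p ^ e) = (if e == 0 then 1 else 2)%N.
Proof.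
move=> pp; rewrite /W (permP (divisors_pexp p e pp)) count_map.
rewrite (@eq_count _ _ (fun j => j <= 1)%N); last first.
  by move=> j /=; rewrite squarefree_pexp.
case: e => [|e] //; rewrite /index_iota subn0 -addn2 addnC iotaD count_cat /=.
rewrite (@eq_in_count _ _ pred0) ?count_pred0 // => j.
by rewrite mem_iota => j_ge2 /=; apply/negbTE; lia.
Qed.

Definition T_term (n t : nat) : rat :=
  (`|moebius (quotg t n)|%:~R : rat) / (totient (quotg t n))%:R * (totient t)%:R.

(* The summand is multiplicative in t, since t |-> t_(n), |mu| and phi are. *)
Lemma T_term_mul n : (0 < n)%N -> multiplicative (T_term n).
Proof.
move=> n0 a b co a0 b0.
have cq : coprime (quotg a n) (quotg b n).
  exact: coprime_dvdl (quotg_dvd a n) (coprime_dvdr (quotg_dvd b n) co).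
rewrite /T_term quotg_mul_coprime // !abs_moebius ?muln_gt0 ?quotg_gt0 //.
rewrite squarefree_mul ?quotg_gt0 // -mulnb !totient_coprime // !natrM invfM.
ring.
Qed.

(* With b = v_p(n): the summand at p^j is phi(p^j) for j <= b, p^b for
   j = b + 1 (as phi(p^(b+1)) / phi(p)), and 0 for j >= b + 2. *)
Lemma T_term_pexp n p j : (0 < n)%N -> prime p ->
  T_term n (p ^ j) = (if (j <= logn p n)%N then totient (p ^ j)
                      else if j == (logn p n).+1 then p ^ logn p n else 0)%N%:R.
Proof.
move=> n0 pp; rewrite /T_term quotg_pexp // abs_moebius ?expn_gt0 ?prime_gt0 //.
set b := logn p n; case: (leqP j b) => [j_le|j_gt].
  by rewrite subnn expn0 /= divr1 mul1r.
case: (eqVneq j b.+1) => [->|j_ne_b1].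
  have -> : (b.+1 - b = 1)%N by lia.
  rewrite expn1 -[X in squarefree X]expn1 squarefree_pexp //= mul1r.
  rewrite totient_prime // totient_pfactor // natrM mulrA mulVf ?mul1r //.
  by rewrite pnatr_eq0 -lt0n -subn1 subn_gt0 prime_gt1.
rewrite squarefree_pexp //; have -> : (j - b <= 1)%N = false by lia.
by rewrite /= mul0r mul0r.
Qed.

Lemma sum_T_term_pexp p a b : prime p ->
  (\sum_(0 <= j < a.+1) (if (j <= b)%N then totient (p ^ j)
                         else if j == b.+1 then p ^ b else 0))%N
  = (p ^ minn a b * (if (b < a)%N then 2 else 1))%N.
Proof.
move=> pp; have p_gt1 := prime_gt1 pp.
elim: a => [|a IH]; first by rewrite big_nat1 min0n.
rewrite big_nat_recr //= IH; case: (ltngtP a b) => [a_lt|b_lt|<-].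
- rewrite (minn_idPl a_lt) ltnNge a_lt /= totient_pfactor //= expnS.
  have := prime_gt0 pp; nia.
- rewrite eqSS (gtn_eqF b_lt) ltnS (ltnW b_lt) (minn_idPr (leqW (ltnW b_lt))).
  lia.
- by rewrite eqxx ltnSn (minn_idPr (leqnSn a)); lia.
Qed.

Lemma T_pexp n p a : (0 < n)%N -> prime p ->
  \sum_(t <- divisors (p ^ a)) T_term n t
  = (p ^ minn a (logn p n) * (if (logn p n < a)%N then 2 else 1))%N%:R.
Proof.
move=> n0 pp; rewrite (perm_big _ (divisors_pexp p a pp)) big_map.
rewrite (eq_bigr _ (fun j _ => T_term_pexp n p j n0 pp)) -natr_sum.
by rewrite sum_T_term_pexp.
Qed.

Definition rhs (n r : nat) : rat := (gcdn r n * W (gcd_quotg n r))%N%:R.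

Lemma rhs_mul n : (0 < n)%N -> multiplicative (rhs n).
Proof.
move=> n0 u v co u0 v0; rewrite /rhs gcdn_mul_coprime // gcd_quotg_mul_coprime //.
rewrite !natrM W_mul ?gcd_quotg_gt0 //; first ring.
exact: coprime_dvdl (dvdn_gcdl _ _) (coprime_dvdr (dvdn_gcdl _ _) co).
Qed.

Lemma rhs_pexp n p a : (0 < n)%N -> prime p ->
  rhs n (p ^ a) = (p ^ minn a (logn p n) * (if (logn p n < a)%N then 2 else 1))%N%:R.
Proof.
move=> n0 pp; rewrite /rhs gcdn_pexp // gcd_quotg_pexp // W_pexp //.
by rewrite subn_eq0 leq_min leqnn /= leqNgt; case: ltnP.
Qed.

Theorem lemma2p4 (r n : nat) (hr : (0 < r)%N) (hn : (0 < n)%N) :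
  \sum_(t <- divisors r)
     ((`|moebius (quotg t n)|%:~R : rat) / (totient (quotg t n))%:R * (totient t)%:R)
  = ((gcdn r n * W (gcdn r (quotg r n)))%N)%:R.
Proof.
change (\sum_(t <- divisors r) T_term n t = rhs n r).
have T_mul := multiplicative_divisor_sum (T_term_mul n hn).
apply: (multiplicative_eq T_mul (rhs_mul n hn) _ _ hr).
by move=> p a pp; rewrite T_pexp // rhs_pexp.
Qed.
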